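(* Let $\mathscr{H}$ be a complex Hilbert space, $N(\cdot)$ a norm on $\mathbb{B}(\mathscr{H})$, and $B,C\in\mathbb{B}(\mathscr{H})$ self-adjoint. Then $$\max\{N(B),N(C)\}\leq w_{(N,e)}(B,C)\leq\sqrt{N^2(B)+N^2(C)}.$$
   Context: For $T\in\mathbb{B}(\mathscr{H})$, $\Re(T)=\frac12(T+T^* )$. For $B,C\in\mathbb{B}(\mathscr{H})$, $w_{(N,e)}(B,C)=\sup_{\lambda_1,\lambda_2\in\mathbb{C},\ |\lambda_1|^2+|\lambda_2|^2\leq 1}\sup_{\theta\in\mathbb{R}} N(\Re(e^{i\theta}(\lambda_1B+\lambda_2C)))$. *)

From mathcomp Require Import all_boot all_order all_algebra.
From mathcomp Require Import all_classical all_reals all_analysis.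
From mathcomp Require Import complex.
Set Implicit Arguments. Unset Strict Implicit. Unset Printing Implicit Defensive.
Import Order.TTheory GRing.Theory Num.Theory.
Local Open Scope ring_scope.
Local Open Scope complex_scope.

Section Hilbert.
Variables (R : realType) (H : lmodType R[i]) (ip : H -> H -> R[i]).

Definition hnorm (x : H) : R := Num.sqrt (complex.Re (ip x x)).

Definition is_hilbert_space : Prop :=
  [/\ (forall (a : R[i]) (x y z : H), ip (a *: x + y) z = a * ip x z + ip y z),
      (forall x y : H, ip y x = (ip x y)^*),
      (forall x : H, 0 <= ip x x),
      (forall x : H, ip x x = 0 -> x = 0) &
      (forall u : nat -> H,
         (forall e : R, 0 < e -> exists N : nat, forall m n : nat,
            (N <= m)%N -> (N <= n)%N -> hnorm (u m - u n) < e) ->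
         exists l : H, forall e : R, 0 < e -> exists N : nat, forall n : nat,
            (N <= n)%N -> hnorm (u n - l) < e)].

Definition bounded_op (T : H -> H) : Prop :=
  (forall (a : R[i]) (x y : H), T (a *: x + y) = a *: T x + T y) /\
  exists M : R, forall x : H, hnorm (T x) <= M * hnorm x.

Definition is_adjoint (T S : H -> H) : Prop :=
  forall x y : H, ip (T x) y = ip x (S y).

(* the adjoint T^* (exists and is unique for T in B(H) on a Hilbert space) *)
Definition adjoint (T : H -> H) : H -> H :=
  match pselect (exists S, is_adjoint T S) with
  | left h => projT1 (cid h)
  | right _ => T
  end.

Definition selfadjoint (T : H -> H) : Prop :=
  bounded_op T /\ forall x y : H, ip (T x) y = ip x (T y).

Definition ReOp (T : H -> H) : H -> H :=
  fun x => (2%:R)^-1 *: (T x + adjoint T x).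

Definition is_norm_BH (N : (H -> H) -> R) : Prop :=
  [/\ (forall T, bounded_op T -> 0 <= N T),
      (forall T, bounded_op T -> N T = 0 -> forall x, T x = 0),
      (forall (a : R[i]) T, bounded_op T -> N (fun x => a *: T x) = Normc.normc a * N T) &
      (forall T S, bounded_op T -> bounded_op S ->
         N (fun x => T x + S x) <= N T + N S)].

Definition expi (t : R) : R[i] := (cos t +i* sin t)%C.

Definition wNe (N : (H -> H) -> R) (B C : H -> H) : R :=
  sup [set r : R | exists (l1 l2 : R[i]) (t : R),
        Normc.normc l1 ^+ 2 + Normc.normc l2 ^+ 2 <= 1 /\
        r = N (ReOp (fun x => expi t *: (l1 *: B x + l2 *: C x)))].

End Hilbert.

(** For self-adjoint [B] and [C], the real part of [e^{it}(l1 B + l2 C)] is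
    [Re(e^{it} l1) B + Re(e^{it} l2) C], a real combination whose coefficient
    vector has Euclidean length at most [|(l1, l2)| <= 1].  The triangle
    inequality, homogeneity of [N] and Cauchy-Schwarz in [R^2] bound its norm
    by [sqrt (N B ^+ 2 + N C ^+ 2)]; the choices [t = 0], [(l1, l2) = (1, 0)]
    and [(0, 1)] show that [N B] and [N C] themselves are among the values
    whose supremum is [w_(N,e)(B, C)]. *)
From mathcomp Require Import all_boot all_order all_algebra.
From mathcomp Require Import all_classical all_reals all_analysis.
From mathcomp Require Import complex.
From mathcomp Require Import ring.
Import Order.TTheory GRing.Theory Num.Theory.
Local Open Scope ring_scope.
Set Implicit Arguments. Unset Strict Implicit.

Section ComplexNorm.
Local Open Scope complex_scope.
Variable R : rcfType.
Implicit Types (r : R) (z : R[i]).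

Lemma normc_ge0 z : 0 <= Normc.normc z.
Proof. by case: z => ? ?; exact: sqrtr_ge0. Qed.

Lemma normc_real r : Normc.normc r%:C = `|r|.
Proof. by rewrite /= expr0n /= addr0 sqrtr_sqr. Qed.

Lemma mulcJ z : z * z^* = (Normc.normc z ^+ 2)%:C.
Proof.
case: z => x y /=; rewrite sqr_sqrtr ?addr_ge0 ?sqr_ge0 //.
by apply/eqP; rewrite eq_complex /= !expr2 mulrN opprK eqxx /= mulrN mulrC addNr.
Qed.

Lemma Re_realM r z : complex.Re (r%:C * z) = r * complex.Re z.
Proof. by case: z => p q /=; rewrite mul0r subr0. Qed.

Lemma sqr_Re_le_normc z : complex.Re z ^+ 2 <= Normc.normc z ^+ 2.
Proof.
case: z => x y /=; rewrite sqr_sqrtr ?addr_ge0 ?sqr_ge0 //.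
by rewrite lerDl sqr_ge0.
Qed.

End ComplexNorm.

Lemma normc_expi (R : realType) (t : R) : Normc.normc (expi t) = 1.
Proof. by rewrite /expi /= cos2Dsin2 sqrtr1. Qed.

Lemma expi0 (R : realType) : expi 0 = 1 :> R[i].
Proof. by rewrite /expi cos0 sin0. Qed.

Lemma cauchy_schwarz2 (R : rcfType) (p q u v : R) :
  0 <= p -> 0 <= q -> 0 <= u -> 0 <= v -> p ^+ 2 + q ^+ 2 <= 1 ->
  p * u + q * v <= Num.sqrt (u ^+ 2 + v ^+ 2).
Proof.
move=> p0 q0 u0 v0 pq_le1.
have dot_ge0 : 0 <= p * u + q * v by rewrite addr_ge0 ?mulr_ge0.
rewrite -[p * u + q * v]ger0_norm // -sqrtr_sqr ler_sqrt ?addr_ge0 ?sqr_ge0 //.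
have lagrange : (p ^+ 2 + q ^+ 2) * (u ^+ 2 + v ^+ 2) - (p * u + q * v) ^+ 2
    = (p * v - q * u) ^+ 2 by rewrite !expr2; ring.
apply: (@le_trans _ _ ((p ^+ 2 + q ^+ 2) * (u ^+ 2 + v ^+ 2))).
  by rewrite -subr_ge0 lagrange sqr_ge0.
by rewrite -[leRHS]mul1r ler_wpM2r // addr_ge0 ?sqr_ge0.
Qed.

Section Sesquilinear.
Local Open Scope complex_scope.
Variables (R : rcfType) (H : lmodType R[i]) (ip : H -> H -> R[i]).
Hypothesis ip_linear :
  forall (a : R[i]) (x y z : H), ip (a *: x + y) z = a * ip x z + ip y z.
Hypothesis ip_conj : forall x y : H, ip y x = (ip x y)^*.

Lemma ip0l z : ip 0 z = 0.
Proof.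
have ip0_dup := ip_linear 1 0 0 z; rewrite scale1r addr0 mul1r in ip0_dup.
by apply: (@addrI _ (ip 0 z)); rewrite addr0 -ip0_dup.
Qed.

Lemma ipDl x y z : ip (x + y) z = ip x z + ip y z.
Proof. by have := ip_linear 1 x y z; rewrite scale1r mul1r. Qed.

Lemma ipZl a x z : ip (a *: x) z = a * ip x z.
Proof. by have := ip_linear a x 0 z; rewrite addr0 ip0l addr0. Qed.

Lemma ipDr x y z : ip z (x + y) = ip z x + ip z y.
Proof. by rewrite ip_conj ipDl [ip z x]ip_conj [ip z y]ip_conj; exact: rmorphD. Qed.

Lemma ipZr a x z : ip z (a *: x) = a^* * ip z x.
Proof. by rewrite ip_conj ipZl [ip z x]ip_conj; exact: rmorphM. Qed.

Lemma ipNr x z : ip z (- x) = - ip z x.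
Proof. by rewrite -scaleN1r ipZr rmorphN1 mulN1r. Qed.

End Sesquilinear.

Section InnerProductSpace.
Local Open Scope complex_scope.
Variables (R : realType) (H : lmodType R[i]) (ip : H -> H -> R[i]).
Hypothesis ip_linear :
  forall (a : R[i]) (x y z : H), ip (a *: x + y) z = a * ip x z + ip y z.
Hypothesis ip_conj : forall x y : H, ip y x = (ip x y)^*.
Hypothesis ip_eq0 : forall x : H, ip x x = 0 -> x = 0.

Lemma hnormZ a v : hnorm ip (a *: v) = Normc.normc a * hnorm ip v.
Proof.
rewrite /hnorm (ipZl ip_linear) (ipZr ip_linear ip_conj) mulrA mulcJ Re_realM.
by rewrite sqrtrM ?sqr_ge0 // sqrtr_sqr ger0_norm ?normc_ge0.
Qed.

Lemma bounded_opZ a T :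
  bounded_op ip T -> bounded_op ip (fun x => a *: T x).
Proof.
move=> [T_linear [M T_bounded]]; split.
  by move=> b x y; rewrite T_linear scalerDr !scalerA mulrC.
exists (Normc.normc a * M) => x; rewrite hnormZ -mulrA.
by rewrite ler_wpM2l ?normc_ge0.
Qed.

Lemma adjoint_eq T S : is_adjoint ip T S -> adjoint ip T =1 S.
Proof.
move=> TS y; rewrite /adjoint; case: pselect => [adj_ex|[]]; last by exists S.
case: (cid adj_ex) => S' TS' /=; apply/eqP; rewrite -subr_eq0; apply/eqP.
apply: ip_eq0; rewrite (ipDr ip_linear ip_conj) (ipNr ip_linear ip_conj).
by rewrite -TS' -TS subrr.
Qed.

Variables B C : H -> H.
Hypothesis B_sym : forall x y : H, ip (B x) y = ip x (B y).
Hypothesis C_sym : forall x y : H, ip (C x) y = ip x (C y).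

Lemma ReOp_expi_comb (l1 l2 : R[i]) (t : R) :
  ReOp ip (fun x => expi t *: (l1 *: B x + l2 *: C x)) =
  (fun x => (complex.Re (expi t * l1))%:C *: B x
            + (complex.Re (expi t * l2))%:C *: C x).
Proof.
set a := expi t * l1; set b := expi t * l2.
have adj : is_adjoint ip (fun x => expi t *: (l1 *: B x + l2 *: C x))
    (fun y => a^* *: B y + b^* *: C y).
  move=> x y /=; rewrite !(ipZl ip_linear, ipDl ip_linear) B_sym C_sym.
  rewrite (ipDr ip_linear ip_conj) !(ipZr ip_linear ip_conj).
  by rewrite mulrDr !mulrA; congr (_ * _ + _ * _); apply/esym/conjcK.
apply: funext => x; rewrite /ReOp (adjoint_eq adj) !ReJ_add.
rewrite !(scalerDr, scalerDl, scalerA) ![2%:R^-1 * _]mulrC.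
by rewrite !mulrDl !scalerDl addrACA ![_ / 2 * _]mulrAC.
Qed.

Lemma ReOp_expi0_B : ReOp ip (fun x => expi 0 *: (1 *: B x + 0 *: C x)) = B.
Proof.
rewrite ReOp_expi_comb expi0 mulr1 mulr0.
by apply: funext => x; rewrite scale0r addr0 scale1r.
Qed.

Lemma ReOp_expi0_C : ReOp ip (fun x => expi 0 *: (0 *: B x + 1 *: C x)) = C.
Proof.
rewrite ReOp_expi_comb expi0 mulr1 mulr0.
by apply: funext => x; rewrite scale0r add0r scale1r.
Qed.

Variable N : (H -> H) -> R.
Hypothesis N_norm : is_norm_BH ip N.
Hypotheses (B_bounded : bounded_op ip B) (C_bounded : bounded_op ip C).

Lemma norm_ReOp_expi_comb_le (l1 l2 : R[i]) (t : R) :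
  Normc.normc l1 ^+ 2 + Normc.normc l2 ^+ 2 <= 1 ->
  N (ReOp ip (fun x => expi t *: (l1 *: B x + l2 *: C x))) <=
  Num.sqrt (N B ^+ 2 + N C ^+ 2).
Proof.
move: N_norm => [N_ge0 _ NZ ND] l_le1; rewrite ReOp_expi_comb.
apply: le_trans (ND _ _ (bounded_opZ _ B_bounded) (bounded_opZ _ C_bounded)) _.
rewrite !NZ // !normc_real; apply: cauchy_schwarz2; rewrite ?normr_ge0 ?N_ge0 //.
rewrite !real_normK ?num_real //; apply: le_trans l_le1.
have Re_expiM_le l : complex.Re (expi t * l) ^+ 2 <= Normc.normc l ^+ 2.
  by rewrite -[Normc.normc l]mul1r -(normc_expi t) -Normc.normcM sqr_Re_le_normc.
by rewrite lerD ?Re_expiM_le.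
Qed.

End InnerProductSpace.

Theorem corollary2p5 (R : realType) (H : lmodType R[i]) (ip : H -> H -> R[i])
  (N : (H -> H) -> R) (B C : H -> H) :
  is_hilbert_space ip -> is_norm_BH ip N ->
  selfadjoint ip B -> selfadjoint ip C ->
  Num.max (N B) (N C) <= wNe ip N B C /\
  wNe ip N B C <= Num.sqrt (N B ^+ 2 + N C ^+ 2).
Proof.
move=> [ip_linear ip_conj _ ip_eq0 _] N_norm [B_bounded B_sym] [C_bounded C_sym].
rewrite /wNe; set S := (X in sup X).
have S_ub : ubound S (Num.sqrt (N B ^+ 2 + N C ^+ 2)).
  by move=> _ [l1 [l2 [t [l_le1 ->]]]]; exact: norm_ReOp_expi_comb_le.
have S_B : S (N B).
  exists 1, 0, 0; rewrite ReOp_expi0_B //.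
  by rewrite Normc.normc1 Normc.normc0 expr1n expr0n addr0.
have S_C : S (N C).
  exists 0, 1, 0; rewrite ReOp_expi0_C //.
  by rewrite Normc.normc1 Normc.normc0 expr1n expr0n add0r.
split; last by apply: ge_sup => //; exists (N B).
by rewrite ge_max !ub_le_sup //; exists (Num.sqrt (N B ^+ 2 + N C ^+ 2)).
Qed.
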